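(* Let $\pi_1^E$ be a collision-free path in $G=(L,\bar{E}_{\text{CF}},c)$ from $p_s$ to $p_g$, with cost $c(\pi_1^E)$, given as input to the smoothing algorithm DagSmooth, and let $\pi_2^E$ be the path returned by DagSmooth, with cost $c(\pi_2^E)$. Then $c(\pi_2^E)\leq c(\pi_1^E)$. Moreover, if $n=0$, DagSmooth runs in time quadratic in the number of vertices along $\pi_1^E$.
   Context: Setting: $L\subseteq\mathcal{X}$ is a lattice of configurations; for any configurations $i,j$ there is an optimal (cost-minimizing, kinodynamically feasible, obstacle-free) motion from $i$ to $j$ with cost $c\geq 0$; these optimal motions between lattice vertices are pre-computed and can be retrieved in constant time. $G=(L,\bar{E}_{\text{CF}},c)$ is a weighted directed graph whose edges $(i,j)$ correspond to collision-free optimal motions from $i$ to $j$ (with respect to obstacles $\mathcal{X}_{\text{obs}}$) with weight equal to their cost. A path $\pi_1^E=\{(i_r,i_{r+1}):r=1,\dots,m-1\}$ in $G$ with $i_1=p_s$, $i_m=p_g$ has cost the sum of edge costs; $C_\pi$ is the set of all configurations along the motions from $i_r$ to $i_{r+1}$. A function $\Psi:\mathbb{R}\to\mathbb{R}$ gives the cost $\Psi(c(p))$ of traversing a motion $p$ backwards. DagSmooth$(\pi_1^E,C_\pi,\mathcal{X}_{\text{obs}},c,n,\Psi)$, with $n\in\mathbb{N}_{\geq0}$: sample $n$ random configurations from $C_\pi$; let $V$ consist of $i_1,\dots,i_m$ together with these samples, listed as $i_1,\dots,i_{m+n}$ in the order they appear along $C_\pi$. Set $\text{dist}(i)=\infty$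 for all $i\in V$, $\text{dist}(i_1)=0$. For $u=1,\dots,m+n-1$ and $v=u+1,\dots,m+n$: let $p_1$ be the optimal motion from $i_u$ to $i_v$ and $p_2$ the optimal motion from $i_v$ to $i_u$ (to be traversed backwards); let $\underline{c},\underline{p}$ be the smaller of $c(p_1),\Psi(c(p_2))$ and the corresponding motion, and $\overline{c},\overline{p}$ the larger and its motion. If $\text{dist}(i_u)+\underline{c}\leq\text{dist}(i_v)$: if $\underline{p}$ is collision-free, set $\text{dist}(i_v)=\text{dist}(i_u)+\underline{c}$ and $\text{Pred}(i_v)=i_u$; otherwise, if $\text{dist}(i_u)+\overline{c}\leq\text{dist}(i_v)$ and $\overline{p}$ is collision-free, set $\text{dist}(i_v)=\text{dist}(i_u)+\overline{c}$ and $\text{Pred}(i_v)=i_u$. Return the path obtained by following the chain of predecessors backwards from the goal $p_g$; its cost is the sum of the chosen costs along it. Running time counts each motion retrieval, cost evaluation and collision check as one operation. *)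

From HB Require Import structures.
From mathcomp Require Import all_boot all_order all_algebra.
Set Implicit Arguments. Unset Strict Implicit. Unset Printing Implicit Defensive.
Import Order.TTheory GRing.Theory Num.Theory.
Local Open Scope ring_scope.

Section DagSmooth.
Variables (R : realFieldType) (X M : Type).
(* L : lattice vertices; opt i j : the (pre-computed) optimal motion from i to j;
   cost p : its cost c(p); cfree p : collision check of motion p against X_obs
   (traversing a motion backwards visits the same configurations, so the same
   check applies); conf p t : configuration at parameter t in [0,1] along p;
   Psi : cost of traversing a motion backwards. *)
Variables (L : pred X) (opt : X -> X -> M) (cost : M -> R) (cfree : M -> bool)
          (conf : M -> R -> X) (Psi : R -> R).

(* extended reals [0, +oo] for dist: None = +oo *)
Definition ext_add (d : option R) (c : R) : option R :=
  if d is Some a then Some (a + c) else None.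
Definition ext_le (d e : option R) : bool :=
  match d, e with
  | Some a, Some b => a <= b
  | _, None => true
  | None, Some _ => false
  end.

Definition is_G_path (ps pg : X) (pi : seq X) : Prop :=
  match pi with
  | [::] => False
  | x :: r => [/\ x = ps, last x r = pg, all L pi & path (fun a b => cfree (opt a b)) x r]
  end.

Definition G_path_cost (pi : seq X) : R :=
  match pi with
  | [::] => 0
  | x :: r => \sum_(c <- pairmap (fun a b => cost (opt a b)) x r) c
  end.

(* S = [:: S_1; ...; S_(m-1)] : sampled parameters on the motion from i_r to i_(r+1),
   listed in the order they appear along it. *)
Definition valid_samples (pi : seq X) (S : seq (seq R)) (n : nat) : Prop :=
  [/\ size S = (size pi).-1,
      all (fun s => sorted (fun a b => a <= b) s) S,
      all (fun s => all (fun t => (0 <= t) && (t <= 1)) s) S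
    & n = sumn (map size S)].

Fixpoint vseq (x : X) (rest : seq X) (S : seq (seq R)) : seq X :=
  match rest with
  | [::] => [::]
  | y :: rest' => [seq conf (opt x y) t | t <- head [::] S] ++ y :: vseq y rest' (behead S)
  end.

(* V = i_1, ..., i_(m+n) : path vertices together with samples, in order along C_pi *)
Definition Vseq (pi : seq X) (S : seq (seq R)) : seq X :=
  match pi with [::] => [::] | x :: r => x :: vseq x r S end.

Record state := State {
  dist : nat -> option R;
  pred : nat -> option nat;
  ecost : nat -> R;   (* cost chosen for the edge (Pred v, v) *)
  ops : nat }.

Definition upd {T} (f : nat -> T) (k : nat) (x : T) : nat -> T :=
  fun j => if j == k then x else f j.

Definition relax (st : state) (u v : nat) (d : option R) (c : R) (o : nat) : state :=
  State (upd (dist st) v d) (upd (pred st) v (Some u)) (upd (ecost st) v c) o.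

Definition set_ops (st : state) (o : nat) : state :=
  State (dist st) (pred st) (ecost st) o.

(* Operation count: 2 motion retrievals, 3 cost evaluations (c(p1), c(p2), Psi),
   1 comparison c(p1) vs Psi(c(p2)), 1 comparison of dist; then each collision
   check, comparison and assignment counts 1. *)
Definition step (x0 : X) (V : seq X) (st : state) (uv : nat * nat) : state :=
  let: (u, v) := uv in
  let x := nth x0 V u in
  let y := nth x0 V v in
  let p1 := opt x y in
  let p2 := opt y x in
  let c1 := cost p1 in
  let c2 := Psi (cost p2) in
  let: (lc, lp, hc, hp) := if c1 <= c2 then (c1, p1, c2, p2) else (c2, p2, c1, p1) in
  let base := (ops st + 7)%N in
  if ext_le (ext_add (dist st u) lc) (dist st v) then
    if cfree lp then relax st u v (ext_add (dist st u) lc) lc (base + 3)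
    else if ext_le (ext_add (dist st u) hc) (dist st v) then
      if cfree hp then relax st u v (ext_add (dist st u) hc) hc (base + 6)
      else set_ops st (base + 4)
    else set_ops st (base + 2)
  else set_ops st base.

Definition pairs (N : nat) : seq (nat * nat) :=
  flatten [seq [seq (u, v) | v <- iota u.+1 (N - u.+1)] | u <- iota 0 N.-1].

Definition init_state (N : nat) : state :=
  State (fun j => if j == 0%N then Some 0 else None) (fun _ => None) (fun _ => 0) N.

Fixpoint chain (st : state) (fuel v : nat) : option (seq nat * R) :=
  if v == 0%N then Some ([:: 0%N], 0) else
  match fuel with
  | 0 => None
  | fuel'.+1 =>
    match pred st v with
    | None => None
    | Some u =>
      match chain st fuel' u with
      | None => None
      | Some (p, c) => Some (rcons p v, c + ecost st v)
      end
    end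
  end.

(* DagSmooth: returns (returned path as a list of configurations with its cost,
   number of operations). The sampled parameters S are the random choices. *)
Definition dag_smooth (ps : X) (pi : seq X) (S : seq (seq R))
  : option (seq X * R) * nat :=
  let V := Vseq pi S in
  let N := size V in
  let st := foldl (step ps V) (init_state N) (pairs N) in
  match chain st N N.-1 with
  | Some (p, c) => (Some ([seq nth ps V i | i <- p], c), (ops st + size p)%N)
  | None => (None, (ops st + N)%N)
  end.

End DagSmooth.

From Pilot Require Import Defs.
From HB Require Import structures.
From mathcomp Require Import all_boot all_order all_algebra.
From mathcomp Require Import zify.
Set Implicit Arguments. Unset Strict Implicit. Unset Printing Implicit Defensive.
Import Order.TTheory GRing.Theory Num.Theory.
Local Open Scope ring_scope.

(* DagSmooth is a Bellman-Ford/DAG shortest-path pass over the vertices V in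
   their order along the input path.  Processing the pairs (u, v) in
   lexicographic order means that [dist u] is final when v is relaxed from it,
   so afterwards [dist v <= dist u + c(u, v)] for every collision-free forward
   motion u -> v.  The input path is a chain of such motions between vertices
   of V, hence [dist goal <= c(pi_1)].  Since distances only decrease, every
   recorded predecessor satisfies [dist (Pred v) + ecost v <= dist v], so the
   predecessor chain of the goal reaches the start with cost at most
   [dist goal].  Each pair costs a bounded number of operations, giving
   O(|V|^2) = O(m^2) time when no configurations are sampled.  Neither part
   needs the costs to be nonnegative. *)

Section ExtendedReals.
Variable R : realFieldType.
Implicit Types (a b d : option R) (c e : R).

Lemma ext_lexx d : ext_le d d.
Proof. by case: d => //= d. Qed.

Lemma ext_le_trans b a d : ext_le a b -> ext_le b d -> ext_le a d.
Proof. by case: a b d => [a|] [b|] [d|] //=; apply: le_trans. Qed.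

Lemma ext_nle_ge a b : ~~ ext_le a b -> ext_le b a.
Proof. by case: a b => [a|] [b|] //=; rewrite -ltNge => /ltW. Qed.

Lemma ext_leD2r c a b : ext_le a b -> ext_le (ext_add a c) (ext_add b c).
Proof. by case: a b => [a|] [b|] //=; rewrite lerD2r. Qed.

Lemma ext_leD2l d c e : c <= e -> ext_le (ext_add d c) (ext_add d e).
Proof. by case: d => //= d; rewrite lerD2l. Qed.

Lemma ext_addA d c e : ext_add (ext_add d c) e = ext_add d (c + e).
Proof. by case: d => //= d; rewrite addrA. Qed.

Lemma ext_add0 d : ext_add d 0 = d.
Proof. by case: d => //= d; rewrite addr0. Qed.

Lemma ext_add_Some d c e : ext_add d c = Some e -> exists2 d', d = Some d' & d' + c <= e.
Proof. by case: d => //= d [<-]; exists d. Qed.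

End ExtendedReals.

Lemma pairs_increasing N : all (fun uv => uv.1 < uv.2)%N (pairs N).
Proof.
apply/allP => -[u v] /flattenP [_ /mapP [u' _ ->]] /mapP [v' + [-> ->]] /=.
by rewrite mem_iota; lia.
Qed.

Lemma size_pairs_le N : (size (pairs N) <= N * N)%N.
Proof.
have size_rows (us : seq nat) :
    (size (flatten [seq [seq (u, v) | v <- iota u.+1 (N - u.+1)] | u <- us])
       <= size us * N)%N.
  by elim: us => //= u us IH; rewrite size_cat size_map size_iota; lia.
by apply: leq_trans (size_rows _) _; rewrite size_iota; lia.
Qed.

Lemma pairs_split N a b : (a < b < N)%N ->
  exists pre post, pairs N = pre ++ (a, b) :: post /\ all (fun uv => uv.2 != a) post.
Proof.
move=> /andP [lt_ab lt_bN]; rewrite /pairs.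
have -> : N.-1 = (a + (N.-1 - a.+1).+1)%N by lia.
rewrite iotaD map_cat flatten_cat /= add0n.
have -> : (N - a.+1 = (b - a.+1) + (N - b.+1).+1)%N by lia.
rewrite iotaD map_cat (_ : (a.+1 + (b - a.+1) = b)%N); last by lia.
rewrite /= -!catA /= catA; do 2 eexists; split; first reflexivity.
rewrite all_cat; apply/andP; split.
  by apply/allP => -[u v] /mapP [v' + [-> ->]] /=; rewrite mem_iota; lia.
apply/allP => -[u v] /flattenP [_ /mapP [u' + ->]] /mapP [v' + [-> ->]] /=.
by rewrite !mem_iota; lia.
Qed.

Section Relaxation.
Variables (R : realFieldType) (X M : Type) (opt : X -> X -> M) (cost : M -> R)
  (cfree : M -> bool) (Psi : R -> R).
Variables (x0 : X) (V : seq X).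
Local Notation step := (step opt cost cfree Psi x0 V).
Local Notation run := (foldl step).
Implicit Types (st : state R) (l : seq (nat * nat)).

Variant step_spec st (u v : nat) : state R -> Prop :=
  | StepKeep o of (o <= ops st + 13)%N : step_spec st u v (set_ops st o)
  | StepRelax c o of (o <= ops st + 13)%N & ext_le (ext_add (dist st u) c) (dist st v) :
      step_spec st u v (relax st u v (ext_add (dist st u) c) c o).

Lemma stepP st u v : step_spec st u v (step st (u, v)).
Proof.
rewrite /Defs.step; case: (_ <= _) => /=;
repeat case: ifP => [?|_]; try (apply: StepRelax => //; lia); apply: StepKeep; lia.
Qed.

Lemma dist_step_le st uv j : ext_le (dist (step st uv) j) (dist st j).
Proof.
case: uv => u v; case: stepP => //= [o _|c o _ le_dv]; first exact: ext_lexx.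
by rewrite /upd; case: eqP => [->|_]; rewrite ?ext_lexx.
Qed.

Lemma dist_step_other st u v j : j != v -> dist (step st (u, v)) j = dist st j.
Proof. by move=> /negbTE ne_jv; case: stepP => //= *; rewrite /upd ne_jv. Qed.

Lemma ops_step_le st uv : (ops (step st uv) <= ops st + 13)%N.
Proof. by case: uv => u v; case: stepP. Qed.

(* The collision-free forward motion is either accepted, or beaten by an
   accepted cheaper backward motion, or already dominated by [dist v]. *)
Lemma step_relaxes_edge st u v : cfree (opt (nth x0 V u) (nth x0 V v)) ->
  ext_le (dist (step st (u, v)) v) (ext_add (dist st u) (cost (opt (nth x0 V u) (nth x0 V v)))).
Proof.
rewrite /=; set p := opt _ _ => cf_p.
set c2 := Psi _; case: ifP => [le_c12|/negbT lt_c21] /=.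
  rewrite cf_p; case: ifP => /= [_|/negbT]; last exact: ext_nle_ge.
  by rewrite /upd eqxx ext_lexx.
have le_c21 : c2 <= cost p by rewrite ltW // ltNge.
case: ifP => [_|/negbT/ext_nle_ge le_v].
  case: ifP => /= _; first by rewrite /upd eqxx; apply: ext_leD2l.
  rewrite cf_p; case: ifP => /= [_|/negbT]; last exact: ext_nle_ge.
  by rewrite /upd eqxx ext_lexx.
exact: ext_le_trans le_v (ext_leD2l _ le_c21).
Qed.

Lemma dist_run_le l st j : ext_le (dist (run st l) j) (dist st j).
Proof.
elim: l st => [|uv l IH] st /=; first exact: ext_lexx.
exact: ext_le_trans (IH _) (dist_step_le _ _ _).
Qed.

Lemma dist_run_other l st j : all (fun uv => uv.2 != j) l ->
  dist (run st l) j = dist st j.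
Proof.
elim: l st => [|[u v] l IH] st //= /andP [ne_vj l_j].
by rewrite IH // dist_step_other // eq_sym.
Qed.

Lemma ops_run_le l st : (ops (run st l) <= ops st + 13 * size l)%N.
Proof.
elim: l st => [|uv l IH] st /=; first lia.
by have := IH (step st uv); have := ops_step_le st uv; lia.
Qed.

Definition relaxed st := forall a b, (a < b < size V)%N ->
  cfree (opt (nth x0 V a) (nth x0 V b)) ->
  ext_le (dist st b) (ext_add (dist st a) (cost (opt (nth x0 V a) (nth x0 V b)))).

Lemma run_pairs_relaxed st : relaxed (run st (pairs (size V))).
Proof.
move=> a b lt_abN cf_ab; have lt_ab : (a < b)%N by case/andP: lt_abN.
have [pre [post [-> post_a]]] := pairs_split lt_abN.
rewrite foldl_cat -[run _ (_ :: _)]/(run (step _ (a, b)) post) (dist_run_other _ post_a).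
rewrite dist_step_other ?ltn_eqF //.
apply: ext_le_trans (dist_run_le _ _ _) _.
exact: step_relaxes_edge.
Qed.

Definition pred_inv st : Prop :=
  dist st 0 = Some 0 /\
  forall v d, v != 0%N -> dist st v = Some d ->
    exists u d', [/\ Defs.pred st v = Some u, (u < v)%N, dist st u = Some d'
                   & d' + ecost st v <= d].

Lemma pred_inv_init N : pred_inv (init_state R N).
Proof. by split => //= v d /negbTE ->. Qed.

Lemma pred_inv_step st u v : pred_inv st -> (u < v)%N -> pred_inv (step st (u, v)).
Proof.
case: stepP => // c o _ le_dv [dist0 inv] lt_uv; split.
  by rewrite /= /upd; case: eqP => // v0; move: lt_uv; rewrite -v0.
move=> w d nz_w /=; rewrite /upd; case: (eqVneq w v) => [-> /ext_add_Some [d' du le_d]|ne_wv dw].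
  by exists u, d'; rewrite ltn_eqF.
have [u' [d' [pw lt_uw du' le_d]]] := inv w d nz_w dw.
exists u'; case: (eqVneq u' v) => [eq_uv|_]; last by exists d'.
move: le_dv; rewrite -eq_uv du'; case: (dist st u) => //= du le_du.
by exists (du + c); split => //; apply: le_trans le_d; rewrite lerD2r.
Qed.

Lemma pred_inv_run l st : pred_inv st -> all (fun uv => uv.1 < uv.2)%N l ->
  pred_inv (run st l).
Proof.
elim: l st => [|[u v] l IH] st //= inv /andP [lt_uv l_lt].
by apply: IH => //; apply: pred_inv_step.
Qed.

End Relaxation.

Section Chain.
Variable R : realFieldType.
Implicit Types st : state R.

Lemma chain_cost_le st fuel v d : pred_inv st -> (v <= fuel)%N -> dist st v = Some d ->
  exists p c, chain st fuel v = Some (p, c) /\ c <= d.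
Proof.
move=> [dist0 inv]; elim: fuel v d => [|f IH] v d le_vf dv /=.
  have v0 : v = 0%N by lia.
  by exists [:: 0%N], 0; move: dv; rewrite v0 dist0 => -[<-].
case: eqP => [v0|/eqP nz_v].
  by exists [:: 0%N], 0; move: dv; rewrite v0 dist0 => -[<-].
have [u [d' [-> lt_uv du le_d]]] := inv v d nz_v dv.
have [p [c [-> le_c]]] := IH u d' (leq_trans lt_uv le_vf) du.
exists (rcons p v), (c + ecost st v); split => //.
by apply: le_trans le_d; rewrite lerD2r.
Qed.

Lemma size_chain_le st fuel v p c : chain st fuel v = Some (p, c) -> (size p <= fuel.+1)%N.
Proof.
elim: fuel v p c => [|f IH] v p c /=; first by case: eqP => // _ [<- _].
case: eqP => [_ [<- _] //|_].
case: (Defs.pred st v) => // u.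
case E: (chain st f u) => [[p' c']|] // [<- _].
by rewrite size_rcons ltnS (IH _ _ _ E).
Qed.

End Chain.

Section DagSmooth.
Variables (R : realFieldType) (X M : Type) (opt : X -> X -> M) (cost : M -> R)
  (cfree : M -> bool) (conf : M -> R -> X) (Psi : R -> R).

Lemma dist_last_le_path_cost x0 V (st : state R) a x r S :
  relaxed opt cost cfree x0 V st ->
  drop a V = x :: vseq opt conf x r S ->
  path (fun a b => cfree (opt a b)) x r ->
  ext_le (dist st (size V).-1) (ext_add (dist st a) (G_path_cost opt cost (x :: r))).
Proof.
move=> edge; elim: r x S a => [|y r IH] x S a /= drop_a.
  have : size (drop a V) = 1%N by rewrite drop_a.
  by rewrite size_drop big_nil ext_add0 => ?; rewrite (_ : (size V).-1 = a) ?ext_lexx; lia.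
case/andP => cf_xy path_y; move: drop_a; set xs := map _ _ => drop_a.
set b := (a + (size xs).+1)%N.
have drop_b : drop b V = y :: vseq opt conf y r (behead S).
  by rewrite /b addnC -drop_drop drop_a /= drop_size_cat.
have nth_a : nth x0 V a = x by rewrite -[a]addn0 -nth_drop drop_a.
have nth_b : nth x0 V b = y by rewrite -[b]addn0 -nth_drop drop_b.
have lt_abN : (a < b < size V)%N.
  have : size (drop b V) != 0%N by rewrite drop_b.
  by rewrite size_drop /b; lia.
have := edge a b lt_abN; rewrite nth_a nth_b => /(_ cf_xy) le_b.
apply: ext_le_trans (IH y (behead S) b drop_b path_y) _.
by apply: ext_le_trans (ext_leD2r _ le_b) _; rewrite ext_addA big_cons ext_lexx.
Qed.

Lemma dag_smooth_cost_le ps x r S : path (fun a b => cfree (opt a b)) x r ->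
  exists pi2 c2, (dag_smooth opt cost cfree conf Psi ps (x :: r) S).1 = Some (pi2, c2) /\
    c2 <= G_path_cost opt cost (x :: r).
Proof.
move=> path_x; rewrite /dag_smooth.
set V := Vseq opt conf (x :: r) S; set st := foldl _ _ _.
have inv : pred_inv st by apply: pred_inv_run; [exact: pred_inv_init | exact: pairs_increasing].
have relaxed_st : relaxed opt cost cfree ps V st by apply: run_pairs_relaxed.
have := dist_last_le_path_cost relaxed_st (drop0 V) path_x.
rewrite (proj1 inv); case dN: (dist st _) => [d|] // le_d.
rewrite /= add0r in le_d.
have [p [c [-> le_c]]] := chain_cost_le inv (leq_pred _) dN.
by do 2 eexists; split; first reflexivity; apply: le_trans le_c le_d.
Qed.

Lemma size_vseq_le x r S : (size (vseq opt conf x r S) <= size r + sumn (map size S))%N.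
Proof.
elim: r x S => [|y r IH] x S //=; rewrite size_cat size_map /=.
by have := IH y (behead S); case: S => [|s S] /=; lia.
Qed.

Lemma dag_smooth_ops_le ps x r S : sumn (map size S) = 0%N ->
  ((dag_smooth opt cost cfree conf Psi ps (x :: r) S).2 <= 16 * (size r).+1 ^ 2)%N.
Proof.
move=> no_samples; rewrite /dag_smooth.
set V := Vseq opt conf (x :: r) S; set st := foldl _ _ _; set N := size V.
have le_N : (N <= (size r).+1)%N.
  by rewrite /N /= ltnS; apply: leq_trans (size_vseq_le _ _ _) _; lia.
have ops_st : (ops st <= N + 13 * (N * N))%N.
  apply: leq_trans (ops_run_le _ _ _ _ _ _ _ _) _.
  by rewrite -/N; have := size_pairs_le N; change (ops (init_state R N)) with N; lia.
have le_N2 : (N * N <= (size r).+1 ^ 2)%N by rewrite expnS expn1 leq_mul.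
have le_sq : ((size r).+1 <= (size r).+1 ^ 2)%N by rewrite expnS expn1 leq_pmulr.
case E: chain => [[p c]|] /=; last by lia.
by have := size_chain_le E; lia.
Qed.

End DagSmooth.

Theorem theorem2 :
  (forall (R : realFieldType) (X M : Type) (L : pred X) (opt : X -> X -> M)
     (cost : M -> R) (cfree : M -> bool) (conf : M -> R -> X) (Psi : R -> R)
     (ps pg : X) (pi : seq X) (S : seq (seq R)) (n : nat),
     (forall p, 0 <= cost p) ->
     is_G_path L opt cfree ps pg pi ->
     valid_samples pi S n ->
     exists (pi2 : seq X) (c2 : R),
       (dag_smooth opt cost cfree conf Psi ps pi S).1 = Some (pi2, c2) /\
       c2 <= G_path_cost opt cost pi)
  /\
  (exists K : nat,
   forall (R : realFieldType) (X M : Type) (L : pred X) (opt : X -> X -> M)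
     (cost : M -> R) (cfree : M -> bool) (conf : M -> R -> X) (Psi : R -> R)
     (ps pg : X) (pi : seq X) (S : seq (seq R)) (n : nat),
     (forall p, 0 <= cost p) ->
     is_G_path L opt cfree ps pg pi ->
     valid_samples pi S n ->
     n = 0%N ->
     ((dag_smooth opt cost cfree conf Psi ps pi S).2 <= K * (size pi) ^ 2)%N).
Proof.
split=> [R X M L opt cost cfree conf Psi ps pg [|x r] S n _ //= [_ _ _ path_x] _|].
  exact: dag_smooth_cost_le path_x.
exists 16%N => R X M L opt cost cfree conf Psi ps pg [|x r] S n _ //= _ [_ _ _ ->].
exact: dag_smooth_ops_le.
Qed.
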